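(* Let $u_1(t_1,t_2)$ and $u_2(t_1,t_2)$ be two left normed commutators in the free variables $t_1,t_2$, each of degree at least two. Then $u_1(C_1,C_2)u_2(C_1,C_2)$ is strongly central in $F$.
   Context: $K$ is an infinite field of characteristic different from 2. Let $X=\{x_1,x_2,x_1',x_2'\}$ and $Y=\{y_1,y_2,y_1',y_2'\}$, and let $K[X;Y]\cong K[X]\otimes_K E(Y)$ be the free supercommutative algebra: the $x$'s are even commuting variables, the $y$'s are odd pairwise anticommuting variables, and $E(Y)$ is the Grassmann algebra on the vector space with basis $Y$. Put $C_1=\begin{pmatrix} x_1&y_1\\ y_1'&x_1'\end{pmatrix}$, $C_2=\begin{pmatrix} x_2&y_2\\ y_2'&x_2'\end{pmatrix}$, and let $F=K[C_1,C_2]$ be the unital $K$-subalgebra of $M_2(K[X;Y])$ generated by $C_1,C_2$. Commutators are $[a,b]=ab-ba$, left normed: $[a_1,\ldots,a_k]=[[a_1,\ldots,a_{k-1}],a_k]$. An element $a\in F$ is strongly central if $a$ is central in $F$ and $ab$ is central in $F$ for every $b\in F$. *)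

From HB Require Import structures.
From mathcomp Require Import all_boot all_order all_algebra.
From mathcomp Require Import mpoly.
Set Implicit Arguments. Unset Strict Implicit. Unset Printing Implicit Defensive.
Import Order.TTheory GRing.Theory.
Local Open Scope ring_scope.

Section SuperAlg.
Variable K : fieldType.

(* K[X] with X = {x1, x2, x1', x2'} encoded as 'X_0, 'X_1, 'X_2, 'X_3. *)
Definition KX := {mpoly K[4]}.

(* K[X;Y] = K[X] (x) E(Y), Y = {y1, y2, y1', y2'} indexed by 'I_4 in that order.
   An element is the family of its coefficients on the Grassmann basis
   y_A = y_{a_1} ... y_{a_k} (a_1 < ... < a_k), A a subset of 'I_4. *)
Definition SC := {ffun {set 'I_4} -> KX}.

(* sign of y_A y_B = sgnAB A B * y_(A :|: B), for disjoint A B *)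
Definition sgnAB (A B : {set 'I_4}) : KX :=
  (-1) ^+ #|[set p : 'I_4 * 'I_4 | [&& p.1 \in A, p.2 \in B & (p.2 < p.1)%N]]|.

Definition sc_mul (g h : SC) : SC :=
  [ffun S : {set 'I_4} => \sum_(A : {set 'I_4} | A \subset S) sgnAB A (S :\: A) * g A * h (S :\: A)].

Definition sc_one : SC := [ffun S : {set 'I_4} => if S == set0 then 1 else 0].

Definition sc_scale (c : K) (g : SC) : SC := [ffun S => c *: g S].

Definition xv (i : 'I_4) : SC := [ffun S : {set 'I_4} => if S == set0 then 'X_i else 0].
Definition yv (j : 'I_4) : SC := [ffun S : {set 'I_4} => if S == [set j] then 1 else 0].

Definition M2 := 'M[SC]_2.

Definition mxmul2 (A B : M2) : M2 :=
  \matrix_(i, j) \sum_(k < 2) sc_mul (A i k) (B k j).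

Definition mxone2 : M2 := \matrix_(i, j) if i == j then sc_one else 0.

Definition mxscale2 (c : K) (A : M2) : M2 := \matrix_(i, j) sc_scale c (A i j).

Definition mk2 (a b c d : SC) : M2 :=
  \matrix_(i < 2, j < 2)
    if i == 0 :> nat then (if j == 0 :> nat then a else b)
    else (if j == 0 :> nat then c else d).

(* C_1 = [[x1, y1], [y1', x1']], C_2 = [[x2, y2], [y2', x2']] *)
Definition C1 : M2 := mk2 (xv 0) (yv 0) (yv 2) (xv 2).
Definition C2 : M2 := mk2 (xv 1) (yv 1) (yv 3) (xv 3).

Definition Cgen (i : 'I_2) : M2 := if i == 0 :> nat then C1 else C2.

Inductive inF : M2 -> Prop :=
  | inF_one : inF mxone2
  | inF_gen (i : 'I_2) : inF (Cgen i)
  | inF_add a b : inF a -> inF b -> inF (a + b)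
  | inF_scale (c : K) a : inF a -> inF (mxscale2 c a)
  | inF_mul a b : inF a -> inF b -> inF (mxmul2 a b).

Definition centralF (a : M2) : Prop :=
  inF a /\ forall b, inF b -> mxmul2 a b = mxmul2 b a.

Definition strongly_centralF (a : M2) : Prop :=
  centralF a /\ forall b, inF b -> centralF (mxmul2 a b).

Definition comm2 (a b : M2) : M2 := mxmul2 a b - mxmul2 b a.

(* the left normed commutator [t_{w_0}, t_{w_1}, ..., t_{w_k}] in the free
   variables t_1, t_2 (indexed by 'I_2), evaluated at t_i := C_i.
   Its degree is size w. *)
Definition lncomm (w : seq 'I_2) : M2 :=
  match w with
  | [::] => mxone2
  | i :: s => foldl (fun acc j => comm2 acc (Cgen j)) (Cgen i) s
  end.

End SuperAlg.

From HB Require Import structures.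
From mathcomp Require Import all_boot all_order all_algebra.
From mathcomp Require Import mpoly.
From mathcomp Require Import ring.
Set Implicit Arguments. Unset Strict Implicit. Unset Printing Implicit Defensive.
Import GRing.Theory.
Local Open Scope ring_scope.

(* Put D = [C_1, C_2]. Each [C_i, C_k] is 0 or +-D, and commuting D further with C_1 or C_2
   lands in an explicit family T(m, e, g_1, g_2) with polynomial parameters, which is stable
   under [-, C_k]; so every left normed commutator of degree at least two is a multiple of D
   or a member of that family. A direct computation shows that for a product Z of two such
   elements, Z commutes with C_1 and C_2 and Z D = 0. The first fact makes Z central in F.
   With the Leibniz rule [ab, c] = a[b, c] + [a, c]b, the second gives Z [b, C_k] = 0 for
   every b in F, hence Z b commutes with C_1 and C_2 and is central as well. *)

Lemma ord4_cases (x : 'I_4) : [\/ x = 0, x = 1, x = 2 | x = 3].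
Proof.
by case: x => [[|[|[|[|//]]]] hx]; [constructor 1|constructor 2|constructor 3|constructor 4];
  apply/val_inj.
Qed.

Lemma ord2_cases (i : 'I_2) : i = 0 \/ i = 1.
Proof. by case: i => [[|[|//]] hi]; [left|right]; apply/val_inj. Qed.

Definition nbit (n i : nat) : bool := odd (iter i half n).

(* [Nat.add] and [Nat.mul] rather than [addn] and [muln], which [simpl] does not evaluate. *)
Definition bits4 (b0 b1 b2 b3 : bool) : nat :=
  Nat.add b0 (Nat.add (Nat.mul 2 b1) (Nat.add (Nat.mul 4 b2) (Nat.mul 8 b3))).

Definition set_of_bits (n : nat) : {set 'I_4} := [set i : 'I_4 | nbit n i].
Definition bits_of_set (S : {set 'I_4}) : nat := bits4 (0 \in S) (1 \in S) (2 \in S) (3 \in S).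

Lemma nbit_bits4 b0 b1 b2 b3 :
  [/\ nbit (bits4 b0 b1 b2 b3) 0 = b0, nbit (bits4 b0 b1 b2 b3) 1 = b1,
      nbit (bits4 b0 b1 b2 b3) 2 = b2 & nbit (bits4 b0 b1 b2 b3) 3 = b3].
Proof. by case: b0; case: b1; case: b2; case: b3. Qed.

Lemma bits_of_set_lt16 S : (bits_of_set S < 16)%N.
Proof.
by rewrite /bits_of_set; case: (0 \in S); case: (1 \in S); case: (2 \in S); case: (3 \in S).
Qed.

Lemma mem_set_of_bits n (i : 'I_4) : (i \in set_of_bits n) = nbit n i.
Proof. by rewrite inE. Qed.

Lemma bits_of_setK : cancel bits_of_set set_of_bits.
Proof.
move=> S; apply/setP => x; rewrite mem_set_of_bits /bits_of_set.
have [h0 h1 h2 h3] := nbit_bits4 (0 \in S) (1 \in S) (2 \in S) (3 \in S).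
by case: (ord4_cases x) => ->.
Qed.

Lemma set_of_bitsK n : (n < 16)%N -> bits_of_set (set_of_bits n) = n.
Proof.
move=> hn; rewrite /bits_of_set !mem_set_of_bits.
by do 16! (case: n hn => [|n] hn; first by []).
Qed.

Lemma eq_set_of_bits m n : (m < 16)%N -> (n < 16)%N ->
  (set_of_bits m == set_of_bits n) = (m == n).
Proof.
move=> hm hn; apply/eqP/eqP => [eq_mn|-> //].
by rewrite -(set_of_bitsK hm) -(set_of_bitsK hn) eq_mn.
Qed.

Lemma set0_bits : set0 = set_of_bits 0.
Proof. by apply/setP => x; rewrite !inE; case: (ord4_cases x) => ->. Qed.

Lemma set1_bits (i : 'I_4) : [set i] = set_of_bits (2 ^ i).
Proof.
by apply/setP => x; rewrite !inE; case: (ord4_cases x) => ->; case: (ord4_cases i) => ->.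
Qed.

Definition inversions (m n : nat) : nat :=
  Nat.add (nbit m 1 && nbit n 0) (Nat.add (nbit m 2 && nbit n 0)
  (Nat.add (nbit m 2 && nbit n 1) (Nat.add (nbit m 3 && nbit n 0)
  (Nat.add (nbit m 3 && nbit n 1) (nbit m 3 && nbit n 2))))).

Lemma card_inversions m n :
  #|[set p : 'I_4 * 'I_4 |
     [&& p.1 \in set_of_bits m, p.2 \in set_of_bits n & (p.2 < p.1)%N]]| = inversions m n.
Proof.
rewrite -sum1_card big_mkcond /=.
have pair_sum (F : 'I_4 * 'I_4 -> nat) : (\sum_p F p = \sum_a \sum_b F (a, b))%N.
  by rewrite pair_big; apply: eq_bigr => -[].
rewrite pair_sum.
rewrite !big_ord_recl !big_ord0 !inE /inversions /nbit /bump /=.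
by case: (odd m); case: (odd m./2); case: (odd m./2./2); case: (odd m./2./2./2);
   case: (odd n); case: (odd n./2); case: (odd n./2./2); case: (odd n./2./2./2).
Qed.

Definition subbits (m n : nat) : bool :=
  [&& nbit m 0 ==> nbit n 0, nbit m 1 ==> nbit n 1, nbit m 2 ==> nbit n 2 & nbit m 3 ==> nbit n 3].

Definition diffbits (n m : nat) : nat :=
  bits4 (nbit n 0 && ~~ nbit m 0) (nbit n 1 && ~~ nbit m 1)
        (nbit n 2 && ~~ nbit m 2) (nbit n 3 && ~~ nbit m 3).

Lemma subset_set_of_bits m n : (set_of_bits m \subset set_of_bits n) = subbits m n.
Proof.
apply/subsetP/and4P => [sub_mn|[h0 h1 h2 h3] x].
  by split; apply/implyP; [move: (sub_mn 0)|move: (sub_mn 1)|move: (sub_mn 2)|move: (sub_mn 3)];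
    rewrite !mem_set_of_bits.
by rewrite !mem_set_of_bits; case: (ord4_cases x) => ->; apply/implyP.
Qed.

Lemma setD_set_of_bits n m : set_of_bits n :\: set_of_bits m = set_of_bits (diffbits n m).
Proof.
apply/setP => x; rewrite !inE /diffbits.
have [h0 h1 h2 h3] := nbit_bits4 (nbit n 0 && ~~ nbit m 0) (nbit n 1 && ~~ nbit m 1)
  (nbit n 2 && ~~ nbit m 2) (nbit n 3 && ~~ nbit m 3).
by case: (ord4_cases x) => ->; rewrite /= ?h0 ?h1 ?h2 ?h3 andbC.
Qed.

Lemma sc_mul_bits (K : fieldType) (g h : SC K) n :
  sc_mul g h (set_of_bits n) =
  \sum_(m < 16) (if subbits m n then (-1) ^+ inversions m (diffbits n m) *
                   g (set_of_bits m) * h (set_of_bits (diffbits n m)) else 0).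
Proof.
rewrite /sc_mul ffunE (reindex (fun m : 'I_16 => set_of_bits m)) /=; last first.
  apply: onW_bij; exists (fun S => Ordinal (bits_of_set_lt16 S)) => [m|S].
    by apply/val_inj/set_of_bitsK.
  exact: bits_of_setK.
rewrite big_mkcond; apply: eq_bigr => m _.
by rewrite subset_set_of_bits setD_set_of_bits /sgnAB card_inversions.
Qed.

Section GrassmannCoordinates.
Variable R : comRingType.

(* Coordinate [n] is the coefficient of the monomial y_A, A = set_of_bits n. *)
Record grass := Grass {
  gc0 : R; gc1 : R; gc2 : R; gc3 : R; gc4 : R; gc5 : R; gc6 : R; gc7 : R;
  gc8 : R; gc9 : R; gc10 : R; gc11 : R; gc12 : R; gc13 : R; gc14 : R; gc15 : R }.

Definition gcoord (a : grass) (n : nat) : R :=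
  match n with
  | 0 => gc0 a | 1 => gc1 a | 2 => gc2 a | 3 => gc3 a | 4 => gc4 a | 5 => gc5 a
  | 6 => gc6 a | 7 => gc7 a | 8 => gc8 a | 9 => gc9 a | 10 => gc10 a | 11 => gc11 a
  | 12 => gc12 a | 13 => gc13 a | 14 => gc14 a | _ => gc15 a
  end.

Lemma grassP (a b : grass) :
  gc0 a = gc0 b -> gc1 a = gc1 b -> gc2 a = gc2 b -> gc3 a = gc3 b ->
  gc4 a = gc4 b -> gc5 a = gc5 b -> gc6 a = gc6 b -> gc7 a = gc7 b ->
  gc8 a = gc8 b -> gc9 a = gc9 b -> gc10 a = gc10 b -> gc11 a = gc11 b ->
  gc12 a = gc12 b -> gc13 a = gc13 b -> gc14 a = gc14 b -> gc15 a = gc15 b -> a = b.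
Proof. by case: a; case: b => /= *; congr Grass. Qed.

Definition gmap (f : R -> R) (a : grass) : grass :=
  Grass (f (gc0 a)) (f (gc1 a)) (f (gc2 a)) (f (gc3 a)) (f (gc4 a)) (f (gc5 a)) (f (gc6 a))
        (f (gc7 a)) (f (gc8 a)) (f (gc9 a)) (f (gc10 a)) (f (gc11 a)) (f (gc12 a))
        (f (gc13 a)) (f (gc14 a)) (f (gc15 a)).
Definition gmap2 (f : R -> R -> R) (a b : grass) : grass :=
  Grass (f (gc0 a) (gc0 b)) (f (gc1 a) (gc1 b)) (f (gc2 a) (gc2 b)) (f (gc3 a) (gc3 b))
        (f (gc4 a) (gc4 b)) (f (gc5 a) (gc5 b)) (f (gc6 a) (gc6 b)) (f (gc7 a) (gc7 b))
        (f (gc8 a) (gc8 b)) (f (gc9 a) (gc9 b)) (f (gc10 a) (gc10 b)) (f (gc11 a) (gc11 b))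
        (f (gc12 a) (gc12 b)) (f (gc13 a) (gc13 b)) (f (gc14 a) (gc14 b)) (f (gc15 a) (gc15 b)).

Definition gadd := gmap2 +%R.
Definition gopp := gmap -%R.
Definition gscale (c : R) := gmap ( *%R c).
Definition gconst (c : R) : grass := Grass c 0 0 0 0 0 0 0 0 0 0 0 0 0 0 0.

Definition gy (i : nat) : grass :=
  match i with
  | 0 => Grass 0 1 0 0 0 0 0 0 0 0 0 0 0 0 0 0
  | 1 => Grass 0 0 1 0 0 0 0 0 0 0 0 0 0 0 0 0
  | 2 => Grass 0 0 0 0 1 0 0 0 0 0 0 0 0 0 0 0
  | _ => Grass 0 0 0 0 0 0 0 0 1 0 0 0 0 0 0 0
  end.

(* The signs are those of sgnAB: reordering y_A y_B into y_(A :|: B). *)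
Definition gmul (a b : grass) : grass := Grass
  (gc0 a * gc0 b)
  (gc0 a * gc1 b + gc1 a * gc0 b)
  (gc0 a * gc2 b + gc2 a * gc0 b)
  (gc0 a * gc3 b + gc1 a * gc2 b - gc2 a * gc1 b + gc3 a * gc0 b)
  (gc0 a * gc4 b + gc4 a * gc0 b)
  (gc0 a * gc5 b + gc1 a * gc4 b - gc4 a * gc1 b + gc5 a * gc0 b)
  (gc0 a * gc6 b + gc2 a * gc4 b - gc4 a * gc2 b + gc6 a * gc0 b)
  (gc0 a * gc7 b + gc1 a * gc6 b - gc2 a * gc5 b + gc3 a * gc4 b + gc4 a * gc3 b - gc5 a * gc2 b
    + gc6 a * gc1 b + gc7 a * gc0 b)
  (gc0 a * gc8 b + gc8 a * gc0 b)
  (gc0 a * gc9 b + gc1 a * gc8 b - gc8 a * gc1 b + gc9 a * gc0 b)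
  (gc0 a * gc10 b + gc2 a * gc8 b - gc8 a * gc2 b + gc10 a * gc0 b)
  (gc0 a * gc11 b + gc1 a * gc10 b - gc2 a * gc9 b + gc3 a * gc8 b + gc8 a * gc3 b
    - gc9 a * gc2 b + gc10 a * gc1 b + gc11 a * gc0 b)
  (gc0 a * gc12 b + gc4 a * gc8 b - gc8 a * gc4 b + gc12 a * gc0 b)
  (gc0 a * gc13 b + gc1 a * gc12 b - gc4 a * gc9 b + gc5 a * gc8 b + gc8 a * gc5 b
    - gc9 a * gc4 b + gc12 a * gc1 b + gc13 a * gc0 b)
  (gc0 a * gc14 b + gc2 a * gc12 b - gc4 a * gc10 b + gc6 a * gc8 b + gc8 a * gc6 b
    - gc10 a * gc4 b + gc12 a * gc2 b + gc14 a * gc0 b)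
  (gc0 a * gc15 b + gc1 a * gc14 b - gc2 a * gc13 b + gc3 a * gc12 b + gc4 a * gc11 b
    - gc5 a * gc10 b + gc6 a * gc9 b + gc7 a * gc8 b - gc8 a * gc7 b + gc9 a * gc6 b
    - gc10 a * gc5 b - gc11 a * gc4 b + gc12 a * gc3 b + gc13 a * gc2 b - gc14 a * gc1 b
    + gc15 a * gc0 b).

Record gmx := Gmx { g11 : grass; g12 : grass; g21 : grass; g22 : grass }.

Lemma gmxP (A B : gmx) :
  g11 A = g11 B -> g12 A = g12 B -> g21 A = g21 B -> g22 A = g22 B -> A = B.
Proof. by case: A; case: B => /= ? ? ? ? ? ? ? ? -> -> -> ->. Qed.

Definition gmx_mul (A B : gmx) : gmx :=
  Gmx (gadd (gmul (g11 A) (g11 B)) (gmul (g12 A) (g21 B)))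
      (gadd (gmul (g11 A) (g12 B)) (gmul (g12 A) (g22 B)))
      (gadd (gmul (g21 A) (g11 B)) (gmul (g22 A) (g21 B)))
      (gadd (gmul (g21 A) (g12 B)) (gmul (g22 A) (g22 B))).
Definition gmx_map (f : grass -> grass) (A : gmx) : gmx :=
  Gmx (f (g11 A)) (f (g12 A)) (f (g21 A)) (f (g22 A)).
Definition gmx_add (A B : gmx) : gmx :=
  Gmx (gadd (g11 A) (g11 B)) (gadd (g12 A) (g12 B)) (gadd (g21 A) (g21 B)) (gadd (g22 A) (g22 B)).
Definition gmx_opp := gmx_map gopp.
Definition gmx_scale (c : R) := gmx_map (gscale c).
Definition gmx0 : gmx := Gmx (gconst 0) (gconst 0) (gconst 0) (gconst 0).
Definition gmx1 : gmx := Gmx (gconst 1) (gconst 0) (gconst 0) (gconst 1).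

End GrassmannCoordinates.

Ltac gmx_ring := apply: gmxP; apply: grassP; rewrite /=; ring.
Ltac destruct_gmx :=
  repeat match goal with A : gmx _ |- _ => case: A => ? ? ? ? end;
  repeat match goal with a : grass _ |- _ => case: a => ? ? ? ? ? ? ? ? ? ? ? ? ? ? ? ? end.

Section GmxRingLaws.
Variable R : comRingType.
Local Notation gmx := (gmx R).

Lemma gmx_mulA (A B C : gmx) : gmx_mul (gmx_mul A B) C = gmx_mul A (gmx_mul B C).
Proof. destruct_gmx; gmx_ring. Qed.

Lemma gmx_mulDl (A B C : gmx) : gmx_mul (gmx_add A B) C = gmx_add (gmx_mul A C) (gmx_mul B C).
Proof. destruct_gmx; gmx_ring. Qed.

Lemma gmx_mulDr (A B C : gmx) : gmx_mul A (gmx_add B C) = gmx_add (gmx_mul A B) (gmx_mul A C).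
Proof. destruct_gmx; gmx_ring. Qed.

Lemma gmx_mul1l (A : gmx) : gmx_mul (gmx1 R) A = A.
Proof. destruct_gmx; gmx_ring. Qed.

Lemma gmx_mul1r (A : gmx) : gmx_mul A (gmx1 R) = A.
Proof. destruct_gmx; gmx_ring. Qed.

Lemma gmx_mulZl c (A B : gmx) : gmx_mul (gmx_scale c A) B = gmx_scale c (gmx_mul A B).
Proof. destruct_gmx; gmx_ring. Qed.

Lemma gmx_mulZr c (A B : gmx) : gmx_mul A (gmx_scale c B) = gmx_scale c (gmx_mul A B).
Proof. destruct_gmx; gmx_ring. Qed.

End GmxRingLaws.

Section Transfer.
Variable K : fieldType.
Local Notation KX := (KX K).
Local Notation SC := (SC K).
Local Notation M2 := (M2 K).

Definition sc_of_grass (a : grass KX) : SC := [ffun S => gcoord a (bits_of_set S)].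

Definition grass_of_sc (g : SC) : grass KX :=
  Grass (g (set_of_bits 0)) (g (set_of_bits 1)) (g (set_of_bits 2)) (g (set_of_bits 3))
        (g (set_of_bits 4)) (g (set_of_bits 5)) (g (set_of_bits 6)) (g (set_of_bits 7))
        (g (set_of_bits 8)) (g (set_of_bits 9)) (g (set_of_bits 10)) (g (set_of_bits 11))
        (g (set_of_bits 12)) (g (set_of_bits 13)) (g (set_of_bits 14)) (g (set_of_bits 15)).

Lemma sc_coordP (g h : SC) :
  (forall n, (n < 16)%N -> g (set_of_bits n) = h (set_of_bits n)) -> g = h.
Proof.
by move=> eq_gh; apply/ffunP => S; rewrite -(bits_of_setK S) eq_gh ?bits_of_set_lt16.
Qed.

Lemma sc_of_grass_bits a n : (n < 16)%N -> sc_of_grass a (set_of_bits n) = gcoord a n.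
Proof. by move=> hn; rewrite ffunE set_of_bitsK. Qed.

Ltac sc_coords tac :=
  let n := fresh "n" in let hn := fresh "hn" in
  apply: sc_coordP => n hn; do 16! (case: n hn => [|n] hn; first by tac).

Lemma grass_of_scK : cancel grass_of_sc sc_of_grass.
Proof. by move=> g; sc_coords ltac:(rewrite sc_of_grass_bits). Qed.

Lemma sc_of_grassD a b : sc_of_grass (gadd a b) = sc_of_grass a + sc_of_grass b.
Proof. by sc_coords ltac:(rewrite !ffunE !set_of_bitsK). Qed.

Lemma sc_of_grassN a : sc_of_grass (gopp a) = - sc_of_grass a.
Proof. by sc_coords ltac:(rewrite !ffunE !set_of_bitsK). Qed.

Lemma sc_of_grassZ c a : sc_of_grass (gscale c%:MP a) = sc_scale c (sc_of_grass a).
Proof. by sc_coords ltac:(rewrite !ffunE !set_of_bitsK //= mul_mpolyC). Qed.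

Lemma sc_of_grass0 : sc_of_grass (gconst 0) = 0.
Proof. by sc_coords ltac:(rewrite !ffunE !set_of_bitsK). Qed.

Lemma sc_of_grass1 : sc_of_grass (gconst 1) = sc_one K.
Proof. by sc_coords ltac:(rewrite !ffunE !set_of_bitsK // set0_bits eq_set_of_bits). Qed.

Lemma sc_of_grass_xv i : sc_of_grass (gconst 'X_i) = xv K i.
Proof. by sc_coords ltac:(rewrite !ffunE !set_of_bitsK // set0_bits eq_set_of_bits). Qed.

Lemma sc_of_grass_yv (i : 'I_4) : sc_of_grass (gy KX i) = yv K i.
Proof.
by case: (ord4_cases i) => ->;
  sc_coords ltac:(rewrite !ffunE !set_of_bitsK // set1_bits eq_set_of_bits).
Qed.

Lemma sc_of_grassM a b : sc_of_grass (gmul a b) = sc_mul (sc_of_grass a) (sc_of_grass b).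
Proof.
by sc_coords ltac:(rewrite sc_mul_bits !big_ord_recl big_ord0 /bump /= !sc_of_grass_bits //=; ring).
Qed.

Definition mx_of_gmx (A : gmx KX) : M2 :=
  mk2 (sc_of_grass (g11 A)) (sc_of_grass (g12 A)) (sc_of_grass (g21 A)) (sc_of_grass (g22 A)).

Definition gmx_of_mx (A : M2) : gmx KX :=
  Gmx (grass_of_sc (A 0 0)) (grass_of_sc (A 0 1)) (grass_of_sc (A 1 0)) (grass_of_sc (A 1 1)).

Ltac mx_entries :=
  let i := fresh "i" in let j := fresh "j" in
  apply/matrixP => i j; rewrite !mxE;
  case: (ord2_cases i) => ->; case: (ord2_cases j) => ->; rewrite /= ?mxE /=.

Lemma gmx_of_mxK : cancel gmx_of_mx mx_of_gmx.
Proof. by move=> A; mx_entries; rewrite grass_of_scK. Qed.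

Lemma mx_of_gmxM A B : mx_of_gmx (gmx_mul A B) = mxmul2 (mx_of_gmx A) (mx_of_gmx B).
Proof. by mx_entries; rewrite !big_ord_recl big_ord0 addr0 !mxE /= sc_of_grassD !sc_of_grassM. Qed.

Lemma mx_of_gmxD A B : mx_of_gmx (gmx_add A B) = mx_of_gmx A + mx_of_gmx B.
Proof. by mx_entries; rewrite sc_of_grassD. Qed.

Lemma mx_of_gmxN A : mx_of_gmx (gmx_opp A) = - mx_of_gmx A.
Proof. by mx_entries; rewrite sc_of_grassN. Qed.

Lemma mx_of_gmxZ c A : mx_of_gmx (gmx_scale c%:MP A) = mxscale2 c (mx_of_gmx A).
Proof. by mx_entries; rewrite sc_of_grassZ. Qed.

Lemma mx_of_gmx0 : mx_of_gmx (gmx0 KX) = 0.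
Proof. by mx_entries; rewrite sc_of_grass0. Qed.

Lemma mx_of_gmx1 : mx_of_gmx (gmx1 KX) = mxone2 K.
Proof. by mx_entries; rewrite ?sc_of_grass0 ?sc_of_grass1. Qed.

Lemma mxmul2A (a b c : M2) : mxmul2 (mxmul2 a b) c = mxmul2 a (mxmul2 b c).
Proof. by rewrite -(gmx_of_mxK a) -(gmx_of_mxK b) -(gmx_of_mxK c) -!mx_of_gmxM gmx_mulA. Qed.

Lemma mxmul2Dl (a b c : M2) : mxmul2 (a + b) c = mxmul2 a c + mxmul2 b c.
Proof.
rewrite -(gmx_of_mxK a) -(gmx_of_mxK b) -(gmx_of_mxK c).
by rewrite -mx_of_gmxD -!mx_of_gmxM gmx_mulDl mx_of_gmxD.
Qed.

Lemma mxmul2Dr (a b c : M2) : mxmul2 a (b + c) = mxmul2 a b + mxmul2 a c.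
Proof.
rewrite -(gmx_of_mxK a) -(gmx_of_mxK b) -(gmx_of_mxK c).
by rewrite -mx_of_gmxD -!mx_of_gmxM gmx_mulDr mx_of_gmxD.
Qed.

Lemma mxmul2_1l (a : M2) : mxmul2 (mxone2 K) a = a.
Proof. by rewrite -(gmx_of_mxK a) -mx_of_gmx1 -mx_of_gmxM gmx_mul1l. Qed.

Lemma mxmul2_1r (a : M2) : mxmul2 a (mxone2 K) = a.
Proof. by rewrite -(gmx_of_mxK a) -mx_of_gmx1 -mx_of_gmxM gmx_mul1r. Qed.

Lemma mxmul2Zl c (a b : M2) : mxmul2 (mxscale2 c a) b = mxscale2 c (mxmul2 a b).
Proof.
by rewrite -(gmx_of_mxK a) -(gmx_of_mxK b) -mx_of_gmxZ -!mx_of_gmxM gmx_mulZl mx_of_gmxZ.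
Qed.

Lemma mxmul2Zr c (a b : M2) : mxmul2 a (mxscale2 c b) = mxscale2 c (mxmul2 a b).
Proof.
by rewrite -(gmx_of_mxK a) -(gmx_of_mxK b) -mx_of_gmxZ -!mx_of_gmxM gmx_mulZr mx_of_gmxZ.
Qed.

End Transfer.

Section StronglyCentral.
Variable K : fieldType.
Local Notation M2 := (M2 K).
Implicit Types a b c Z : M2.

Lemma mxmul2_0l a : mxmul2 0 a = 0.
Proof. by apply: (addrI (mxmul2 0 a)); rewrite -mxmul2Dl !addr0. Qed.

Lemma mxmul2_0r a : mxmul2 a 0 = 0.
Proof. by apply: (addrI (mxmul2 a 0)); rewrite -mxmul2Dr !addr0. Qed.

Lemma mxmul2Nl a b : mxmul2 (- a) b = - mxmul2 a b.
Proof. by apply: (addrI (mxmul2 a b)); rewrite -mxmul2Dl !subrr mxmul2_0l. Qed.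

Lemma mxmul2Nr a b : mxmul2 a (- b) = - mxmul2 a b.
Proof. by apply: (addrI (mxmul2 a b)); rewrite -mxmul2Dr !subrr mxmul2_0r. Qed.

Lemma mxscale2N1 a : mxscale2 (-1) a = - a.
Proof. by apply/matrixP => i j; rewrite !mxE; apply/ffunP => S; rewrite !ffunE scaleN1r. Qed.

Lemma mxscale2B s a b : mxscale2 s (a - b) = mxscale2 s a - mxscale2 s b.
Proof. by apply/matrixP => i j; rewrite !mxE; apply/ffunP => S; rewrite !ffunE scalerBr. Qed.

Lemma mxscale20 s : mxscale2 s (0 : M2) = 0.
Proof. by apply/matrixP => i j; rewrite !mxE; apply/ffunP => S; rewrite !ffunE scaler0. Qed.

Lemma comm21 c : comm2 (mxone2 K) c = 0.
Proof. by rewrite /comm2 mxmul2_1l mxmul2_1r subrr. Qed.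

Lemma comm2D a b c : comm2 (a + b) c = comm2 a c + comm2 b c.
Proof. by rewrite /comm2 mxmul2Dl mxmul2Dr opprD addrACA. Qed.

Lemma comm2Z s a c : comm2 (mxscale2 s a) c = mxscale2 s (comm2 a c).
Proof. by rewrite /comm2 mxmul2Zl mxmul2Zr mxscale2B. Qed.

Lemma comm2M a b c : comm2 (mxmul2 a b) c = mxmul2 a (comm2 b c) + mxmul2 (comm2 a c) b.
Proof.
rewrite /comm2 mxmul2Dr mxmul2Dl mxmul2Nr mxmul2Nl !mxmul2A.
by rewrite addrA subrK.
Qed.

Lemma inF_opp a : inF a -> inF (- a).
Proof. by rewrite -mxscale2N1; apply: inF_scale. Qed.

Lemma inF_comm2 a b : inF a -> inF b -> inF (comm2 a b).
Proof. by move=> Fa Fb; apply: inF_add; [|apply: inF_opp]; apply: inF_mul. Qed.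

Lemma inF_lncomm w : inF (lncomm K w).
Proof.
case: w => [|i s] /=; first exact: inF_one.
elim: s (Cgen K i) (inF_gen K i) => [|k s IHs] a Fa //=.
by apply: IHs; apply: inF_comm2 => //; apply: inF_gen.
Qed.

Lemma commute_inF Z : (forall i, comm2 Z (Cgen K i) = 0) ->
  forall b, inF b -> mxmul2 Z b = mxmul2 b Z.
Proof.
move=> ZC b; elim=> [|i|a a' _ IHa _ IHb|s a _ IHa|a a' _ IHa _ IHb].
- by rewrite mxmul2_1l mxmul2_1r.
- exact: subr0_eq (ZC i).
- by rewrite mxmul2Dl mxmul2Dr IHa IHb.
- by rewrite mxmul2Zl mxmul2Zr IHa.
- by rewrite -mxmul2A IHa !mxmul2A IHb.
Qed.

Lemma mul_comm2_Cgen_eq0 Z : (forall b, inF b -> mxmul2 Z b = mxmul2 b Z) ->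
  (forall i k, mxmul2 Z (comm2 (Cgen K i) (Cgen K k)) = 0) ->
  forall b, inF b -> forall k, mxmul2 Z (comm2 b (Cgen K k)) = 0.
Proof.
move=> Zcentral ZD b; elim=> [|i|a a' _ IHa _ IHb|s a _ IHa|a a' Fa IHa _ IHb] k.
- by rewrite comm21 mxmul2_0r.
- exact: ZD.
- by rewrite comm2D mxmul2Dr IHa IHb addr0.
- by rewrite comm2Z mxmul2Zr IHa mxscale20.
- by rewrite comm2M mxmul2Dr -!mxmul2A IHa mxmul2_0l (Zcentral a Fa) mxmul2A IHb mxmul2_0r addr0.
Qed.

Lemma strongly_centralF_criterion Z : inF Z ->
  (forall i, comm2 Z (Cgen K i) = 0) ->
  (forall i k, mxmul2 Z (comm2 (Cgen K i) (Cgen K k)) = 0) -> strongly_centralF Z.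
Proof.
move=> FZ ZC ZD; have Zcentral := commute_inF ZC.
split=> [|b Fb]; first by split.
split; first exact: inF_mul.
by apply: commute_inF => k; rewrite comm2M mul_comm2_Cgen_eq0 // ZC mxmul2_0l addr0.
Qed.

End StronglyCentral.

Section CommutatorForms.
(* x0, x1, x2, x3 stand for x_1, x_2, x_1', x_2'. *)
Variables (R : comRingType) (x0 x1 x2 x3 : R).
Local Notation gmx := (gmx R).
Local Notation d1 := (x2 - x0).
Local Notation d2 := (x3 - x1).

Definition gC1 : gmx := Gmx (gconst x0) (gy R 0) (gy R 2) (gconst x2).
Definition gC2 : gmx := Gmx (gconst x1) (gy R 1) (gy R 3) (gconst x3).
Definition ggen (i : 'I_2) : gmx := if i == 0 :> nat then gC1 else gC2.

Definition gcomm (A B : gmx) : gmx := gmx_add (gmx_mul A B) (gmx_opp (gmx_mul B A)).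

(* nu [[w, d2 y1 - d1 y2], [d1 y2' - d2 y1', w]] with w = y1 y2' - y2 y1'; for nu = 1
   this is [C_1, C_2]. *)
Definition pair_form (nu : R) : gmx :=
  let w := Grass 0 0 0 0 0 0 (- nu) 0 0 nu 0 0 0 0 0 0 in
  Gmx w (Grass 0 (d2 * nu) (- d1 * nu) 0 0 0 0 0 0 0 0 0 0 0 0 0)
        (Grass 0 0 0 0 (- d2 * nu) 0 0 0 (d1 * nu) 0 0 0 0 0 0 0) w.

(* With s = d1 g1 + d2 g2: the off-diagonal entries are m s (d2 y1 - d1 y2) and
   m e s (d1 y2' - d2 y1'). *)
Definition long_form (m e g1 g2 : R) : gmx :=
  let s := d1 * g1 + d2 * g2 in
  let w := Grass 0 0 0 0 0 (m * d2 * g1 * (1 - e)) (- m * (d1 * g1 + d2 * e * g2)) 0 0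
                 (m * (d2 * g2 + d1 * e * g1)) (- m * d1 * g2 * (1 - e)) 0 0 0 0 0 in
  Gmx w (Grass 0 (m * d2 * s) (- m * d1 * s) 0 0 0 0 0 0 0 0 0 0 0 0 0)
        (Grass 0 0 0 0 (- m * e * d2 * s) 0 0 0 (m * e * d1 * s) 0 0 0 0 0 0 0) w.

Definition is_long_form (U : gmx) : Prop := exists m e g1 g2, U = long_form m e g1 g2.

Definition comm_form (U : gmx) : Prop := (exists nu, U = pair_form nu) \/ is_long_form U.

Lemma gcomm_ggen i k : exists nu, gcomm (ggen i) (ggen k) = pair_form nu.
Proof.
by case: (ord2_cases i) => ->; case: (ord2_cases k) => ->;
  [exists 0|exists 1|exists (-1)|exists 0]; gmx_ring.
Qed.

Lemma gcomm_comm_form U k : comm_form U -> is_long_form (gcomm U (ggen k)).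
Proof.
case=> [[nu ->]|[m [e [g1 [g2 ->]]]]]; case: (ord2_cases k) => ->.
- by exists nu, (-1), 1, 0; gmx_ring.
- by exists nu, (-1), 0, 1; gmx_ring.
- by exists (m * (d1 * g1 + d2 * g2)), (- e), 1, 0; gmx_ring.
- by exists (m * (d1 * g1 + d2 * g2)), (- e), 0, 1; gmx_ring.
Qed.

Lemma comm_form_mul_commute U1 U2 k : comm_form U1 -> comm_form U2 ->
  gcomm (gmx_mul U1 U2) (ggen k) = gmx0 R.
Proof.
by case=> [[? ->]|[? [? [? [? ->]]]]] [[? ->]|[? [? [? [? ->]]]]];
  case: (ord2_cases k) => ->; gmx_ring.
Qed.

Lemma comm_form_mul_pair_form U1 U2 nu : comm_form U1 -> comm_form U2 ->
  gmx_mul (gmx_mul U1 U2) (pair_form nu) = gmx0 R.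
Proof.
by case=> [[? ->]|[? [? [? [? ->]]]]] [[? ->]|[? [? [? [? ->]]]]]; gmx_ring.
Qed.

End CommutatorForms.

Section LeftNormedCommutators.
Variable K : fieldType.
Local Notation ggenX := (ggen ('X_0 : KX K) 'X_1 'X_2 'X_3).
Local Notation comm_formX := (comm_form ('X_0 : KX K) 'X_1 'X_2 'X_3).

Lemma Cgen_gmx i : Cgen K i = mx_of_gmx (ggenX i).
Proof.
by rewrite /Cgen /C1 /C2 -!sc_of_grass_xv -!sc_of_grass_yv; case: (ord2_cases i) => ->.
Qed.

Lemma comm2_gmx (A B : gmx (KX K)) : comm2 (mx_of_gmx A) (mx_of_gmx B) = mx_of_gmx (gcomm A B).
Proof. by rewrite /gcomm mx_of_gmxD mx_of_gmxN !mx_of_gmxM. Qed.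

Lemma lncomm_form w : (2 <= size w)%N -> exists2 U, comm_formX U & lncomm K w = mx_of_gmx U.
Proof.
case: w => [|i [|k s]] //= _.
have [nu Eik] := gcomm_ggen ('X_0 : KX K) 'X_1 'X_2 'X_3 i k.
rewrite (Cgen_gmx i) (Cgen_gmx k) comm2_gmx Eik.
have : comm_formX (pair_form 'X_0 'X_1 'X_2 'X_3 nu) by left; exists nu.
elim: s (pair_form _ _ _ _ nu) => [|j s IHs] U formU /=; first by exists U.
by rewrite Cgen_gmx comm2_gmx; apply: IHs; right; apply: gcomm_comm_form.
Qed.

Lemma strongly_centralF_mul_comm_form (U1 U2 : gmx (KX K)) : comm_formX U1 -> comm_formX U2 ->
  inF (mx_of_gmx (gmx_mul U1 U2)) -> strongly_centralF (mx_of_gmx (gmx_mul U1 U2)).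
Proof.
move=> form1 form2 FZ; apply: strongly_centralF_criterion => // [i|i k].
  by rewrite Cgen_gmx comm2_gmx comm_form_mul_commute // mx_of_gmx0.
rewrite !Cgen_gmx comm2_gmx; have [nu ->] := gcomm_ggen ('X_0 : KX K) 'X_1 'X_2 'X_3 i k.
by rewrite -mx_of_gmxM comm_form_mul_pair_form // mx_of_gmx0.
Qed.

End LeftNormedCommutators.

Unset Implicit Arguments.

Theorem lemma7 (K : fieldType)
  (K_infinite : forall s : seq K, exists x : K, x \notin s)
  (K_char : (2%:R : K) != 0)
  (w1 w2 : seq 'I_2) (hw1 : (2 <= size w1)%N) (hw2 : (2 <= size w2)%N) :
  strongly_centralF (mxmul2 (lncomm K w1) (lncomm K w2)).
Proof.
have FZ := inF_mul (inF_lncomm K w1) (inF_lncomm K w2).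
have [U1 form1 E1] := lncomm_form K hw1.
have [U2 form2 E2] := lncomm_form K hw2.
rewrite E1 E2 -mx_of_gmxM in FZ *.
exact: strongly_centralF_mul_comm_form.
Qed.
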